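(* Let $C\subseteq\mathbb{F}_q^n$ be a linear code and $(A,B)$ a $2$-power $t$-error locating pair for $C$. Let $\mathbf{y}=\mathbf{c}+\mathbf{e}$ with $\mathbf{c}\in C$, $\mathrm{w}(\mathbf{e})=t$, $I_{\mathbf{e}}=\mathrm{supp}(\mathbf{e})$, and set $\mathbf{e}^{(1)}=\mathbf{e}$, $\mathbf{e}^{(2)}=\mathbf{y}^2-\mathbf{c}^2$. Let $M=M_1\cap M_2$ with $M_1=\{\mathbf{a}\in A\mid \langle \mathbf{a}*\mathbf{y},\mathbf{b}\rangle=0\ \forall \mathbf{b}\in B\}$, $M_2=\{\mathbf{a}\in A\mid \langle \mathbf{a}*\mathbf{y}^2,\mathbf{v}\rangle=0\ \forall \mathbf{v}\in (B^{\perp}*C)^{\perp}\}$. Then $$M_{I_{\mathbf{e}}}=A_{I_{\mathbf{e}}}\cap \big((\mathbf{e}^{(1)}*B)_{I_{\mathbf{e}}}\big)^{\perp}\cap \big((\mathbf{e}^{(2)}*(B^\perp*C)^\perp)_{I_{\mathbf{e}}}\big)^{\perp},$$ where the duals are taken in $\mathbb{F}_q^{|I_{\mathbf{e}}|}$.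
   Context: All codes are $\mathbb{F}_q$-linear subspaces of $\mathbb{F}_q^n$. $\mathbf{u}*\mathbf{v}=(u_1v_1,\dots,u_nv_n)$, $\mathbf{u}^i=(u_1^i,\dots,u_n^i)$; $A*B$ is the span of all $\mathbf{a}*\mathbf{b}$; for a vector $\mathbf{u}$ and code $X$, $\mathbf{u}*X=\{\mathbf{u}*\mathbf{x}:\mathbf{x}\in X\}$; $\langle\mathbf{u},\mathbf{v}\rangle=\sum_iu_iv_i$, $X^\perp$ the dual. $\mathrm{w}$ Hamming weight, $\mathrm{d}$ minimum distance, $\mathrm{supp}(\mathbf{x})=\{i:x_i\ne0\}$. For $J=\{j_1<\dots<j_s\}$, $X_J=\{(x_{j_1},\dots,x_{j_s}):\mathbf{x}\in X\}$ (puncturing keeping coordinates in $J$). A pair $(A,B)$ is a $2$-power $t$-error locating pair for $C$ if: (1) $A*B\subseteq C^\perp$; (2) $\dim A>t$; (3) $\mathrm{d}(A^\perp)>t$; (4) $\mathrm{d}(A)+\mathrm{d}(C)>n$; (5) $\dim B+\dim (B^\perp*C)^\perp\ge t$. *)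

From HB Require Import structures.
From mathcomp Require Import all_boot all_order all_algebra.
Set Implicit Arguments. Unset Strict Implicit. Unset Printing Implicit Defensive.
Import GRing.Theory.
Local Open Scope ring_scope.

Section Codes.
Variable F : finFieldType.

Definition star n (u v : 'rV[F]_n) : 'rV[F]_n := \row_i (u 0 i * v 0 i).

Definition dotp n (u v : 'rV[F]_n) : F := \sum_i u 0 i * v 0 i.

Definition supp n (x : 'rV[F]_n) : {set 'I_n} := [set i | x 0 i != 0].
Definition wt n (x : 'rV[F]_n) : nat := #|supp x|.

Definition span_of n (P : pred 'rV[F]_n) : {vspace 'rV[F]_n} :=
  <<[seq x <- enum 'rV[F]_n | P x]>>%VS.

Definition star_code n (A B : {vspace 'rV[F]_n}) : {vspace 'rV[F]_n} :=
  <<[seq star x.1 x.2 | x <- enum [pred x : 'rV[F]_n * 'rV[F]_n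
                                        | (x.1 \in A) && (x.2 \in B)]]>>%VS.

Definition star_vec n (u : 'rV[F]_n) (X : {vspace 'rV[F]_n}) : {vspace 'rV[F]_n} :=
  <<[seq star u x | x <- enum 'rV[F]_n & x \in X]>>%VS.

Definition dual n (X : {vspace 'rV[F]_n}) : {vspace 'rV[F]_n} :=
  span_of [pred x | [forall y, (y \in X) ==> (dotp x y == 0)]].

(* minimum distance; the zero code gets n+1 (playing the role of +infinity) *)
Definition mindist n (X : {vspace 'rV[F]_n}) : nat :=
  \big[minn/n.+1]_(x : 'rV[F]_n | (x \in X) && (x != 0)) wt x.

(* puncturing: keep the coordinates in J, in increasing order *)
Definition punct n (J : {set 'I_n}) (x : 'rV[F]_n) : 'rV[F]_#|J| :=
  \row_(k < #|J|) x 0 (enum_val k).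

Definition punct_code n (J : {set 'I_n}) (X : {vspace 'rV[F]_n})
  : {vspace 'rV[F]_#|J|} :=
  <<[seq punct J x | x <- enum 'rV[F]_n & x \in X]>>%VS.

Definition two_power_ELP n (A B C : {vspace 'rV[F]_n}) (t : nat) : Prop :=
  [/\ (star_code A B <= dual C)%VS,
      (t < \dim A)%N,
      (t < mindist (dual A))%N,
      (n < mindist A + mindist C)%N
    & (t <= \dim B + \dim (dual (star_code (dual B) C)))%N].

Definition M1 n (A B : {vspace 'rV[F]_n}) (y : 'rV[F]_n) : {vspace 'rV[F]_n} :=
  span_of [pred a | (a \in A) && [forall b, (b \in B) ==> (dotp (star a y) b == 0)]].

Definition M2 n (A B C : {vspace 'rV[F]_n}) (y : 'rV[F]_n) : {vspace 'rV[F]_n} :=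
  span_of [pred a | (a \in A) &&
     [forall v, (v \in dual (star_code (dual B) C)) ==> (dotp (star a (star y y)) v == 0)]].

End Codes.

From HB Require Import structures.
From mathcomp Require Import all_boot all_order all_algebra.
Set Implicit Arguments. Unset Strict Implicit. Unset Printing Implicit Defensive.
Import GRing.Theory.
Local Open Scope ring_scope.

(* For a in A and b in B, <a*y, b> = <a*c, b> + <a*e, b>, and <a*c, b> = <a*b, c>
   vanishes because A*B is orthogonal to C; what remains, <a, e*b>, only sees the
   coordinates in supp e.  In the same way a*c lies in B^perp, so (a*c)*c lies in
   B^perp*C and <a*y^2, v> = <a, e2*v> for v in (B^perp*C)^perp, where
   e2 = y^2 - c^2 is again supported on supp e.  Hence whether a lies in M1 and
   in M2 is decided by the punctured vector a_I alone. *)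

Lemma span_ind (K : fieldType) (vT : vectType K) (P : vT -> Prop) (s : seq vT) v :
  P 0 -> (forall k x y, P x -> P y -> P (k *: x + y)) ->
  {in s, forall x, P x} -> v \in <<s>>%VS -> P v.
Proof.
move=> P0 Plin Ps /(coord_span (X := in_tuple s)) ->.
apply: (big_ind P) => // [x y Px Py|i _]; first by rewrite -[x]scale1r; apply: Plin.
by rewrite -[_ *: _]addr0; apply: Plin => //; apply/Ps/mem_nth.
Qed.

Section Codes.
Variable F : finFieldType.

Fact star_is_linear n (u : 'rV[F]_n) : linear (star u).
Proof. by move=> k x y; apply/rowP => i; rewrite !mxE mulrDr mulrCA. Qed.
HB.instance Definition _ n (u : 'rV[F]_n) :=
  GRing.isLinear.Build F 'rV[F]_n 'rV[F]_n _ (star u) (star_is_linear u).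

Fact punct_is_linear n (I : {set 'I_n}) : linear (@punct F n I).
Proof. by move=> k x y; apply/rowP => i; rewrite !mxE. Qed.
HB.instance Definition _ n (I : {set 'I_n}) :=
  GRing.isLinear.Build F 'rV[F]_n 'rV[F]_#|I| _ (@punct F n I) (punct_is_linear I).

Section Bilinear.
Variable n : nat.
Implicit Types u v w x z : 'rV[F]_n.

Lemma starC : commutative (@star F n).
Proof. by move=> u v; apply/rowP => i; rewrite !mxE mulrC. Qed.

Lemma starA : associative (@star F n).
Proof. by move=> u v w; apply/rowP => i; rewrite !mxE mulrA. Qed.

Lemma dotpC : commutative (@dotp F n).
Proof. by move=> u v; apply: eq_bigr => i _; rewrite mulrC. Qed.

Lemma dotp0l z : dotp 0 z = 0.
Proof. by rewrite /dotp big1 // => i _; rewrite mxE mul0r. Qed.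

Lemma dotp_linear_l k x v z : dotp (k *: x + v) z = k * dotp x z + dotp v z.
Proof.
rewrite /dotp mulr_sumr -big_split; apply: eq_bigr => i _.
by rewrite !mxE mulrDl mulrA.
Qed.

Lemma dotpDl x v z : dotp (x + v) z = dotp x z + dotp v z.
Proof. by rewrite -(mul1r (dotp x z)) -dotp_linear_l scale1r. Qed.

Lemma dotp_starA u v w : dotp (star u v) w = dotp u (star v w).
Proof. by apply: eq_bigr => i _; rewrite !mxE mulrA. Qed.

Lemma supp_starl u v : supp (star u v) \subset supp u.
Proof.
by apply/subsetP => i; rewrite !inE mxE; apply: contraNneq => ->; rewrite mul0r.
Qed.

Lemma dotp_punct (I : {set 'I_n}) x w :
  supp w \subset I -> dotp x w = dotp (punct I x) (punct I w).
Proof.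
move=> /subsetP suppw; rewrite /dotp (bigID (mem I)) /= [X in _ + X]big1 ?addr0.
  by rewrite big_enum_val; apply: eq_bigr => i _; rewrite !mxE.
move=> i notIi; have := contra (suppw i) notIi; rewrite inE negbK => /eqP ->.
by rewrite mulr0.
Qed.

End Bilinear.

Lemma mem_span_of n (P : pred 'rV[F]_n) v :
  P 0 -> (forall k x y, P x -> P y -> P (k *: x + y)) -> (v \in span_of P) = P v.
Proof.
move=> P0 Plin; apply/idP/idP => [|Pv]; last first.
  by apply: memv_span; rewrite mem_filter Pv mem_enum.
by apply: (span_ind (P := P)) => // x; rewrite mem_filter => /andP[].
Qed.

Lemma span_enum_vspace n (X : {vspace 'rV[F]_n}) :
  <<[seq x <- enum 'rV[F]_n | x \in X]>>%VS = X.
Proof.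
apply/eqP; rewrite eqEsubv; apply/andP; split.
  by apply/span_subvP => x; rewrite mem_filter => /andP[].
by apply/subvP => x Xx; apply: memv_span; rewrite mem_filter Xx mem_enum.
Qed.

Lemma mem_span_image m k (f : {linear 'rV[F]_m -> 'rV[F]_k})
    (X : {vspace 'rV[F]_m}) v :
  reflect (exists2 x, x \in X & v = f x)
          (v \in <<[seq f x | x <- enum 'rV[F]_m & x \in X]>>%VS).
Proof.
rewrite -(eq_map (lfunE f)) -limg_span span_enum_vspace.
by apply: (iffP memv_imgP) => -[x Xx ->]; exists x; rewrite ?lfunE.
Qed.

Lemma mem_punct_code n (I : {set 'I_n}) (X : {vspace 'rV[F]_n}) z :
  reflect (exists2 x, x \in X & z = punct I x) (z \in punct_code I X).
Proof. exact: mem_span_image. Qed.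

Lemma mem_punct_star_vec n (I : {set 'I_n}) u (X : {vspace 'rV[F]_n}) z :
  reflect (exists2 x, x \in X & z = punct I (star u x))
          (z \in punct_code I (star_vec u X)).
Proof.
apply: (iffP (mem_punct_code _ _)) => [[_ /mem_span_image[x Xx ->] ->]|[x Xx ->]].
  by exists x.
by exists (star u x) => //; apply/mem_span_image; exists x.
Qed.

Lemma memv_punct n (I : {set 'I_n}) (X : {vspace 'rV[F]_n}) x :
  x \in X -> punct I x \in punct_code I X.
Proof. by move=> Xx; apply/mem_punct_code; exists x. Qed.

Lemma memv_star_code n (X Y : {vspace 'rV[F]_n}) x y :
  x \in X -> y \in Y -> star x y \in star_code X Y.
Proof.
move=> Xx Yy; apply: memv_span.
apply: (map_f (fun z => star z.1 z.2) (x := (x, y))).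
by rewrite mem_enum inE /= Xx Yy.
Qed.

Lemma mem_dual n (X : {vspace 'rV[F]_n}) x :
  reflect (forall y, y \in X -> dotp x y = 0) (x \in dual X).
Proof.
rewrite mem_span_of /=.
- by apply: (iffP forall_inP) => orth y /orth /eqP.
- by apply/forall_inP => y _; rewrite dotp0l.
move=> k u v /forall_inP orth_u /forall_inP orth_v; apply/forall_inP => y Xy.
by rewrite dotp_linear_l (eqP (orth_u y Xy)) (eqP (orth_v y Xy)) mulr0 addr0.
Qed.

Lemma mem_span_orth_star n (X Q : {vspace 'rV[F]_n}) u v :
  (v \in span_of [pred a | (a \in X) && [forall (b | b \in Q), dotp (star a u) b == 0]])
  = (v \in X) && [forall (b | b \in Q), dotp (star v u) b == 0].
Proof.
rewrite mem_span_of //=.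
- by rewrite mem0v; apply/forall_inP => b _; rewrite dotp_starA dotp0l.
move=> k x y /andP[Xx /forall_inP orth_x] /andP[Xy /forall_inP orth_y].
rewrite rpredD ?rpredZ //=; apply/forall_inP => b Qb.
move: (orth_x b Qb) (orth_y b Qb); rewrite !dotp_starA dotp_linear_l.
by move=> /eqP -> /eqP ->; rewrite mulr0 addr0.
Qed.

Lemma orth_star_punct n (I : {set 'I_n}) (Q : {vspace 'rV[F]_n}) u w a :
  (forall b, b \in Q -> dotp (star a u) b = dotp (punct I a) (punct I (star w b))) ->
  [forall (b | b \in Q), dotp (star a u) b == 0]
  = (punct I a \in dual (punct_code I (star_vec w Q))).
Proof.
move=> punctE; apply/forall_inP/mem_dual.
  by move=> orth _ /mem_punct_star_vec[b Qb ->]; rewrite -punctE // (eqP (orth b Qb)).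
move=> orth b Qb.
by rewrite punctE // orth //; apply/mem_punct_star_vec; exists b.
Qed.

Lemma supp_sqr_diff n (u w : 'rV[F]_n) :
  supp (star (u + w) (u + w) - star u u) \subset supp w.
Proof.
apply/subsetP => i; rewrite !inE !mxE; apply: contraNneq => ->.
by rewrite addr0 subrr.
Qed.

Section ErrorLocatingPair.
Variables (n : nat) (A B C : {vspace 'rV[F]_n}) (c e : 'rV[F]_n).
Hypotheses (AB_dualC : (star_code A B <= dual C)%VS) (Cc : c \in C).

Lemma star_codeword_dual a : a \in A -> star a c \in dual B.
Proof.
move=> Aa; apply/mem_dual => b Bb; rewrite dotp_starA starC -dotp_starA.
by move/mem_dual: (subvP AB_dualC _ (memv_star_code Aa Bb)); apply.
Qed.

Lemma dotp_star_received a b : a \in A -> b \in B ->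
  dotp (star a (c + e)) b = dotp (punct (supp e) a) (punct (supp e) (star e b)).
Proof.
move=> Aa Bb; move/mem_dual: (star_codeword_dual Aa) => ac_orth.
rewrite linearD dotpDl ac_orth // add0r dotp_starA.
exact/dotp_punct/supp_starl.
Qed.

Lemma dotp_sqr_received a v : a \in A -> v \in dual (star_code (dual B) C) ->
  dotp (star a (star (c + e) (c + e))) v
  = dotp (punct (supp e) a) (punct (supp e) (star (star (c + e) (c + e) - star c c) v)).
Proof.
move=> Aa /mem_dual v_orth.
rewrite -{1}(subrK (star c c) (star (c + e) (c + e))) linearD /= dotpDl starA.
have acc_dual : star (star a c) c \in star_code (dual B) C.
  exact/memv_star_code/Cc/star_codeword_dual.
rewrite [dotp (star _ c) v]dotpC (v_orth _ acc_dual) addr0.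
rewrite dotp_starA; apply: dotp_punct.
exact: subset_trans (supp_starl _ _) (supp_sqr_diff _ _).
Qed.

Lemma mem_M1_punct a : a \in A ->
  (a \in M1 A B (c + e))
  = (punct (supp e) a \in dual (punct_code (supp e) (star_vec e B))).
Proof.
move=> Aa; rewrite mem_span_orth_star Aa; apply: orth_star_punct => b.
exact: dotp_star_received.
Qed.

Lemma mem_M2_punct a : a \in A ->
  (a \in M2 A B C (c + e))
  = (punct (supp e) a \in dual (punct_code (supp e)
       (star_vec (star (c + e) (c + e) - star c c) (dual (star_code (dual B) C))))).
Proof.
move=> Aa; rewrite mem_span_orth_star Aa; apply: orth_star_punct => v.
exact: dotp_sqr_received.
Qed.

End ErrorLocatingPair.

End Codes.

Theorem theorem3p8 (F : finFieldType) (n t : nat)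
    (A B C : {vspace 'rV[F]_n}) (c e : 'rV[F]_n) :
  two_power_ELP A B C t ->
  c \in C -> wt e = t ->
  let y := c + e in
  let I := supp e in
  let e1 := e in
  let e2 := star y y - star c c in
  let Bd := dual (star_code (dual B) C) in
  punct_code I (M1 A B y :&: M2 A B C y)%VS =
  (punct_code I A
   :&: dual (punct_code I (star_vec e1 B))
   :&: dual (punct_code I (star_vec e2 Bd)))%VS.
Proof.
move=> [AB_dualC _ _ _ _] Cc _ y I e1 e2 Bd.
have M1E := mem_M1_punct e AB_dualC Cc.
have M2E := mem_M2_punct e AB_dualC Cc.
apply/vspaceP => x; rewrite !memv_cap; apply/idP/idP.
  case/mem_punct_code => a; rewrite memv_cap => /andP[M1a M2a] ->.
  have Aa : a \in A by move: M1a; rewrite mem_span_orth_star => /andP[].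
  by rewrite memv_punct // -M1E // -M2E // M1a.
case/andP => /andP[/mem_punct_code[a Aa ->] a1] a2.
by apply/mem_punct_code; exists a; rewrite // memv_cap M1E // M2E // a1.
Qed.
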